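(* Let $C\ge2$, $\boldsymbol{M}^\star=\sqrt{\frac{C}{C-1}}\left(\boldsymbol{I}-\frac1C\mathbf{1}\mathbf{1}^\top\right)\in\mathbb{R}^{C\times C}$ with columns $\boldsymbol{\mu}^\star_1,\dots,\boldsymbol{\mu}^\star_C$. For $c\ne c'$ let $\mathcal{K}_{c,c'}=\{\boldsymbol{z}\in\mathbb{R}^C:\ (\boldsymbol{M}^\star(\boldsymbol{\mu}^\star_c+\boldsymbol{z}))(c')\ge(\boldsymbol{M}^\star(\boldsymbol{\mu}^\star_c+\boldsymbol{z}))(c)\}$, where $\boldsymbol{v}(k)$ denotes the $k$-th coordinate of $\boldsymbol{v}$, and let $\boldsymbol{z}^\star_{c,c'}$ be a minimizer of $\frac12\|\boldsymbol{z}\|_2^2$ over $\boldsymbol{z}\in\mathcal{K}_{c,c'}$. Then for all $c\ne c'$, $$\|\boldsymbol{z}^\star_{c,c'}\|_2=\frac12\|\boldsymbol{\mu}^\star_c-\boldsymbol{\mu}^\star_{c'}\|_2.$$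
   Context: $\mathbf{1}$ denotes the all-ones vector in $\mathbb{R}^C$. The set $\mathcal{K}_{c,c'}$ is the set of noise vectors $\boldsymbol{z}$ for which the linear classifier with weight matrix $\boldsymbol{M}^\star$ and zero bias scores class $c'$ at least as high as class $c$ on the input $\boldsymbol{\mu}^\star_c+\boldsymbol{z}$. *)

From mathcomp Require Import all_boot all_order all_algebra.
Set Implicit Arguments. Unset Strict Implicit. Unset Printing Implicit Defensive.
Import Order.TTheory GRing.Theory Num.Theory.
Local Open Scope ring_scope.

Definition Mstar (R : rcfType) (C : nat) : 'M[R]_C :=
  Num.sqrt (C%:R / (C%:R - 1)) *: (1%:M - C%:R^-1 *: const_mx 1).

Definition mustar (R : rcfType) (C : nat) (c : 'I_C) : 'cV[R]_C :=
  col c (Mstar R C).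

Definition norm2 (R : rcfType) (C : nat) (v : 'cV[R]_C) : R :=
  Num.sqrt (\sum_(i < C) (v i 0) ^+ 2).

Definition Kcc (R : rcfType) (C : nat) (c c' : 'I_C) (z : 'cV[R]_C) : Prop :=
  (Mstar R C *m (mustar R c + z)) c 0 <= (Mstar R C *m (mustar R c + z)) c' 0.

(** The classifier [M*] is a positive multiple [s] of the centering projection,
    so the score gap [(M* v)(c') - (M* v)(c)] is [s (v(c') - v(c))].  Since
    [mu*_c(c') - mu*_c(c) = -s], the set [K_{c,c'}] is the half-space
    [z(c') - z(c) >= s], whose least squared norm [s^2/2] is attained at
    [(s/2)(e_c' - e_c)].  On the other hand [mu*_c - mu*_c' = s (e_c - e_c')]
    has squared norm [2 s^2], a quarter of which is [s^2/2]. *)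
From mathcomp Require Import all_boot all_order all_algebra.
From mathcomp Require Import ring lra.
Set Implicit Arguments. Unset Strict Implicit. Unset Printing Implicit Defensive.
Import Order.TTheory GRing.Theory Num.Theory.
Local Open Scope ring_scope.

Lemma mulmx_centeringE (R : pzRingType) (n p : nat) (a b : R)
    (v : 'M[R]_(n, p)) i k :
  (a *: (1%:M - b *: const_mx 1) *m v) i k = a * (v i k - b * \sum_j v j k).
Proof.
rewrite -scalemxAl mulmxBl mul1mx -scalemxAl !mxE.
by congr (_ * (_ - _ * _)); apply: eq_bigr => j _; rewrite mxE mul1r.
Qed.

Lemma mulmx_centering_sub (R : comPzRingType) (n : nat) (a b : R)
    (v : 'cV[R]_n) i j :
  let M := a *: (1%:M - b *: const_mx 1) in
  (M *m v) i 0 - (M *m v) j 0 = a * (v i 0 - v j 0).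
Proof. by rewrite /= !mulmx_centeringE; ring. Qed.

Section SquaredNorm.
Variables (R : rcfType) (C : nat).
Implicit Types (v w z : 'cV[R]_C) (c : 'I_C).

Lemma norm2_ge0 v : 0 <= norm2 v.
Proof. exact: sqrtr_ge0. Qed.

Lemma sqr_norm2 v : norm2 v ^+ 2 = \sum_i v i 0 ^+ 2.
Proof. by rewrite sqr_sqrtr // sumr_ge0 // => i _; rewrite sqr_ge0. Qed.

Lemma sqr_norm2_pair v c c' : c != c' ->
  norm2 v ^+ 2 =
    v c 0 ^+ 2 + v c' 0 ^+ 2 + \sum_(i | (i != c) && (i != c')) v i 0 ^+ 2.
Proof.
by move=> neq_cc'; rewrite sqr_norm2 (bigD1 c) // (bigD1 c') 1?eq_sym //= addrA.
Qed.

Lemma sqr_gap_le_sqr_norm2 v c c' : c != c' ->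
  (v c' 0 - v c 0) ^+ 2 / 2 <= norm2 v ^+ 2.
Proof.
move=> neq_cc'; rewrite (sqr_norm2_pair v neq_cc').
have rest_ge0 : 0 <= \sum_(i | (i != c) && (i != c')) v i 0 ^+ 2.
  by apply: sumr_ge0 => i _; apply: sqr_ge0.
have := sqr_ge0 (v c' 0 + v c 0); nra.
Qed.

Lemma sqr_norm2_delta_sub (a : R) c c' : c != c' ->
  norm2 (a *: (delta_mx c 0 - delta_mx c' 0)) ^+ 2 = 2 * a ^+ 2.
Proof.
move=> neq_cc'; rewrite (sqr_norm2_pair _ neq_cc') big1 => [|i /andP[ic ic']].
  by rewrite !mxE !eqxx !andbT (negbTE neq_cc') eq_sym (negbTE neq_cc') /=; ring.
by rewrite !mxE !andbT (negbTE ic) (negbTE ic') /= subrr mulr0 expr0n.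
Qed.

Lemma sqr_norm2_gap_minimizer (s : R) c c' z : c != c' -> 0 <= s ->
  s <= z c' 0 - z c 0 ->
  (forall w, s <= w c' 0 - w c 0 -> norm2 z ^+ 2 <= norm2 w ^+ 2) ->
  norm2 z ^+ 2 = s ^+ 2 / 2.
Proof.
move=> neq_cc' s_ge0 gap_z z_min.
pose w0 : 'cV[R]_C := (s / 2) *: (delta_mx c' 0 - delta_mx c 0).
have gap_w0 : s <= w0 c' 0 - w0 c 0.
  by rewrite !mxE !eqxx eq_sym (negbTE neq_cc') /=; lra.
have z_le : norm2 z ^+ 2 <= s ^+ 2 / 2.
  by have := z_min _ gap_w0; rewrite sqr_norm2_delta_sub 1?eq_sym //; lra.
have gap_sqr : s ^+ 2 <= (z c' 0 - z c 0) ^+ 2.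
  by rewrite ler_pXn2r // nnegrE; lra.
apply: le_anti; rewrite z_le /=.
apply: le_trans (sqr_gap_le_sqr_norm2 z neq_cc'); lra.
Qed.

End SquaredNorm.

Section SimplexETF.
Variables (R : rcfType) (C : nat).
Implicit Types (c : 'I_C).

Definition mstar_scale : R := Num.sqrt (C%:R / (C%:R - 1)).

Lemma mstar_scale_gt0 : (2 <= C)%N -> 0 < mstar_scale.
Proof.
move=> C_ge2; rewrite sqrtr_gt0 divr_gt0 ?ltr0n 1?subr_gt0 ?ltr1n //.
by apply: leq_trans C_ge2.
Qed.

Lemma mustarE c :
  mustar R c = mstar_scale *: (delta_mx c 0 - C%:R^-1 *: const_mx 1).
Proof. by apply/matrixP => i j; rewrite !mxE [j]ord1 eqxx andbT. Qed.

Lemma mustar_sub c c' :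
  mustar R c - mustar R c' = mstar_scale *: (delta_mx c 0 - delta_mx c' 0).
Proof.
by rewrite !mustarE -scalerBr; congr (_ *: _); rewrite opprB addrA subrK.
Qed.

Lemma KccE c c' w : c != c' -> 0 < mstar_scale ->
  Kcc c c' w <-> mstar_scale <= w c' 0 - w c 0.
Proof.
move=> neq_cc' s_gt0; rewrite /Kcc -subr_ge0 mulmx_centering_sub -/mstar_scale.
rewrite mustarE !mxE !eqxx andbT eq_sym (negbTE neq_cc') /= pmulr_rge0 //.
rewrite [X in 0 <= X](_ : _ = w c' 0 - w c 0 - mstar_scale) ?subr_ge0 //.
ring.
Qed.

End SimplexETF.

Theorem lemma12 (R : rcfType) (C : nat) (hC : (2 <= C)%N)
  (c c' : 'I_C) (hcc : c != c') (z : 'cV[R]_C)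
  (hzK : Kcc c c' z)
  (hmin : forall w : 'cV[R]_C, Kcc c c' w ->
     2^-1 * norm2 z ^+ 2 <= 2^-1 * norm2 w ^+ 2) :
  norm2 z = 2^-1 * norm2 (mustar R c - mustar R c').
Proof.
have s_gt0 := mstar_scale_gt0 R hC.
have Ez : norm2 z ^+ 2 = mstar_scale R C ^+ 2 / 2.
  apply: (sqr_norm2_gap_minimizer hcc (ltW s_gt0)); first by apply/KccE.
  by move=> w /(KccE _ hcc s_gt0)/hmin; rewrite ler_pM2l ?invr_gt0.
apply/eqP; rewrite -(@eqrXn2 _ 2) ?mulr_ge0 ?invr_ge0 ?norm2_ge0 //.
rewrite exprMn Ez mustar_sub sqr_norm2_delta_sub //.
by apply/eqP; field.
Qed.
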